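(* Assume (A1) differentiability, (A2) convexity, (A3) $\mu$-strong convexity of $f$, (A4) interpolation and (SS) Star Similarity with constant $\delta_*>0$ (with respect to the point $x_*$, which is the minimizer of $f$ and satisfies (A4)). If the stepsize satisfies $0<\gamma\le\frac{\mu}{2\delta_*^2}$, then the iterates of SPPM satisfy, for every $k\ge0$, $$\mathbb{E}\big[\|x_k-x_*\|^2\big]\le\left(1-\min\Big(\frac{\gamma\mu}{4},\frac12\Big)\right)^k\|x_0-x_*\|^2 .$$
   Context: Setting: $\mathcal{D}$ is a probability distribution over samples $\xi$; for each $\xi$, $f_\xi:\mathbb{R}^d\to\mathbb{R}$; $f(x)=\mathbb{E}_{\xi\sim\mathcal{D}}[f_\xi(x)]$, with $\nabla f(x)=\mathbb{E}[\nabla f_\xi(x)]$. Assumptions: (A1) $f_\xi$ differentiable for $\mathcal{D}$-a.e. $\xi$; (A2) $f_\xi$ convex for $\mathcal{D}$-a.e. $\xi$; (A3) $f(x)\ge f(y)+\langle\nabla f(y),x-y\rangle+\frac\mu2\|x-y\|^2$ for all $x,y$; (A4) (interpolation) there exists $x_*$ with $\nabla f_\xi(x_* )=0$ for $\mathcal{D}$-a.e. $\xi$; (SS) (Star Similarity) there exist a minimizer $x_*$ of $f$ and $\delta_*>0$ with $\mathbb{E}_{\xi\sim\mathcal{D}}\big[\|\nabla f_\xi(x)-\nabla f(x)-\nabla f_\xi(x_* )\|^2\big]\le\delta_*^2\|x-x_*\|^2$ for all $x\in\mathbb{R}^d$. SPPM: given $\gamma>0$, $x_0\in\mathbb{R}^d$,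 and i.i.d. $\xi_0,\xi_1,\dots\sim\mathcal{D}$, set $x_{k+1}=\arg\min_{z}\{f_{\xi_k}(z)+\frac{1}{2\gamma}\|z-x_k\|^2\}$. *)

From HB Require Import structures.
From mathcomp Require Import all_boot all_order all_algebra.
From mathcomp Require Import all_classical all_reals all_analysis.
Set Implicit Arguments. Unset Strict Implicit. Unset Printing Implicit Defensive.
Import Order.TTheory GRing.Theory Num.Theory.
Import numFieldNormedType.Exports.
Local Open Scope ring_scope.

Definition dotv (R : realType) (d : nat) (x y : 'rV[R]_d) : R :=
  \sum_(i < d) x ord0 i * y ord0 i.

Definition sqn (R : realType) (d : nat) (x : 'rV[R]_d) : R := dotv x x.

Definition is_gradient (R : realType) (d : nat) (h : 'rV[R]_d -> R^o)
  (gr : 'rV[R]_d) (x : 'rV[R]_d) : Prop :=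
  differentiable h x /\ forall v, 'd h x v = dotv gr v.

Definition convex_fun (R : realType) (d : nat) (h : 'rV[R]_d -> R) : Prop :=
  forall (x y : 'rV[R]_d) (t : R), 0 <= t -> t <= 1 ->
    h (t *: x + (1 - t) *: y) <= t * h x + (1 - t) * h y.

(* SPPM iterate after processing the samples s = [:: xi_0; ...; xi_(k-1)]:
   x_(j+1) = prox xi_j x_j, starting from x0. *)
Definition sppm (T : Type) (V : Type) (prox : T -> V -> V) (x0 : V)
  (s : seq T) : V := foldl (fun x xi => prox xi x) x0 s.

(* Expectation with respect to n i.i.d. samples xi_0, ..., xi_(n-1) ~ D of a
   (nonnegative) function of the sample list [:: xi_0; ...; xi_(n-1)],
   computed as the iterated integral (product measure D^n). *)
Fixpoint iid_expect (dT : measure_display) (T : measurableType dT)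
  (R : realType) (D : probability T R) (n : nat)
  (Phi : seq T -> \bar R) {struct n} : \bar R :=
  match n with
  | 0 => Phi [::]
  | n'.+1 => (\int[D]_xi iid_expect D n' (fun s => Phi (xi :: s)))%E
  end.

(* Compare one SPPM step from x with the exact proximal point p = prox_{γf}(x),
   whose optimality condition reads x - p = γ ∇f(p).  For every sample ξ, the
   three-point inequality of x⁺ = prox_{γf_ξ}(x) together with convexity of f_ξ
   at p gives
     ‖x⁺ - x⋆‖² + 2γ (f_ξ(p) - f_ξ(x⋆)) + ‖x - p‖²
       ≤ ‖x - x⋆‖² + γ² ‖∇f_ξ(p) - ∇f(p) - ∇f_ξ(x⋆)‖².
   In expectation, star similarity bounds the last term by γ²δ_*²‖p - x⋆‖²
   ≤ (γμ/2)‖p - x⋆‖², strong convexity gives f(p) - f(x⋆) ≥ (μ/2)‖p - x⋆‖², and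
   ‖x - x⋆‖² ≤ 2‖x - p‖² + 2‖p - x⋆‖² turns this into a contraction by
   1 - min(γμ/4, 1/2), which is iterated over the i.i.d. samples. *)

From HB Require Import structures.
From mathcomp Require Import all_boot all_order all_algebra.
From mathcomp Require Import all_classical all_reals all_analysis.
From mathcomp Require Import ring lra.
From mathcomp Require Import measurable_realfun.
Set Implicit Arguments. Unset Strict Implicit. Unset Printing Implicit Defensive.
Import Order.TTheory GRing.Theory Num.Theory.
Import numFieldNormedType.Exports.
Local Open Scope classical_set_scope.
Local Open Scope ring_scope.

Section InnerProduct.
Variables (R : realType) (d : nat).
Implicit Types (x y z : 'rV[R]_d).

Lemma dotvC x y : dotv x y = dotv y x.
Proof. by apply: eq_bigr => i _; rewrite mulrC. Qed.

Lemma dotvDl x y z : dotv (x + y) z = dotv x z + dotv y z.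
Proof. by rewrite /dotv -big_split; apply: eq_bigr => i _; rewrite mxE mulrDl. Qed.

Lemma dotvNl x y : dotv (- x) y = - dotv x y.
Proof. by rewrite /dotv -sumrN; apply: eq_bigr => i _; rewrite mxE mulNr. Qed.

Lemma dotvZl (t : R) x y : dotv (t *: x) y = t * dotv x y.
Proof. by rewrite /dotv mulr_sumr; apply: eq_bigr => i _; rewrite mxE mulrA. Qed.

Lemma dotvBl x y z : dotv (x - y) z = dotv x z - dotv y z.
Proof. by rewrite dotvDl dotvNl. Qed.

Lemma dotvDr x y z : dotv x (y + z) = dotv x y + dotv x z.
Proof. by rewrite dotvC dotvDl !(dotvC x). Qed.

Lemma dotvNr x y : dotv x (- y) = - dotv x y.
Proof. by rewrite dotvC dotvNl dotvC. Qed.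

Lemma dotvBr x y z : dotv x (y - z) = dotv x y - dotv x z.
Proof. by rewrite dotvDr dotvNr. Qed.

Lemma dotvZr (t : R) x y : dotv x (t *: y) = t * dotv x y.
Proof. by rewrite dotvC dotvZl dotvC. Qed.

Lemma dotv0l x : dotv 0 x = 0.
Proof. by rewrite -(scale0r 0) dotvZl mul0r. Qed.

Lemma sqn_ge0 x : 0 <= sqn x.
Proof. by apply: sumr_ge0 => i _; rewrite -expr2 sqr_ge0. Qed.

Lemma sqn_eq0 x : sqn x = 0 -> x = 0.
Proof.
move=> /eqP; rewrite psumr_eq0 => [/allP x0|i _]; last by rewrite -expr2 sqr_ge0.
apply/rowP => i; rewrite mxE; apply/eqP.
by have /implyP/(_ isT) := x0 i (mem_index_enum i); rewrite mulf_eq0 orbb.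
Qed.

Lemma sqnD x y : sqn (x + y) = sqn x + 2 * dotv x y + sqn y.
Proof. by rewrite /sqn dotvDl !dotvDr (dotvC y x); ring. Qed.

Lemma sqnB x y : sqn (x - y) = sqn x - 2 * dotv x y + sqn y.
Proof. by rewrite /sqn dotvBl !dotvBr (dotvC y x); ring. Qed.

Lemma sqnZ (t : R) x : sqn (t *: x) = t ^+ 2 * sqn x.
Proof. by rewrite /sqn dotvZl dotvZr mulrA expr2. Qed.

Lemma sqnN x : sqn (- x) = sqn x.
Proof. by rewrite /sqn dotvNl dotvNr opprK. Qed.

Lemma sqn_addZ x (t : R) v :
  sqn (x + t *: v) = sqn x + 2 * t * dotv x v + t ^+ 2 * sqn v.
Proof. by rewrite sqnD dotvZr sqnZ mulrA. Qed.

Lemma sqn_subC x y : sqn (x - y) = sqn (y - x).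
Proof. by rewrite -opprB sqnN. Qed.

Lemma sqn_le_add x y : sqn (x + y) <= 2 * sqn x + 2 * sqn y.
Proof. by have := sqn_ge0 (x - y); rewrite sqnB sqnD; lra. Qed.

Lemma sqr_coord_le_sqn x i : x ord0 i ^+ 2 <= sqn x.
Proof.
rewrite /sqn /dotv (bigD1 i) //= expr2 lerDl.
by apply: sumr_ge0 => j _; rewrite -expr2 sqr_ge0.
Qed.

Lemma continuous_sqnB x : continuous (fun w : 'rV[R]_d => sqn (w - x) : R^o).
Proof.
pose sqc i (w : 'rV[R]_d) : R^o := (w ord0 i - x ord0 i) * (w ord0 i - x ord0 i).
have -> : (fun w : 'rV[R]_d => sqn (w - x) : R^o) =
    (fun w => \sum_(i <- index_enum 'I_d) sqc i w).
  by apply/funext => w; apply: eq_bigr => i _; rewrite !mxE.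
apply: (@continuous_big _ _ +%R 0 xpredT add_continuous _ _ sqc) => i _ w.
apply: (@continuousM R 'rV[R]_d); apply: (@continuousB R R^o 'rV[R]_d);
  by [exact: coord_continuous | exact: cst_continuous].
Qed.

End InnerProduct.

Section RightLimit.
Variable R : realType.

Lemma cvg_right_ge (q : R -> R) (L c B : R) : q t @[t --> 0^'+] --> L ->
  (forall t, 0 < t <= 1 -> c <= q t + t * B) -> c <= L.
Proof.
move=> qL qB.
have : q t + t * B @[t --> 0^'+] --> L + 0 * B.
  apply: cvgD => //; apply: cvgM; last exact: cvg_cst.
  exact: cvg_at_right_filter cvg_id.
rewrite mul0r addr0 => /cvgr_to_ge; apply.
near=> t; apply: qB; apply/andP; split; near: t.
  exact: nbhs_right_gt.
exact: nbhs_right_le.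
Unshelve. all: by end_near.
Qed.

End RightLimit.

Definition prox_objective (R : realType) (d : nat) (h : 'rV[R]_d -> R) (gam : R)
  (x w : 'rV[R]_d) : R := h w + sqn (w - x) / (2 * gam).

Definition is_prox (R : realType) (d : nat) (h : 'rV[R]_d -> R) (gam : R)
  (x y : 'rV[R]_d) : Prop :=
  forall z, prox_objective h gam x y <= prox_objective h gam x z.

Section Prox.
Variables (R : realType) (d : nat).
Implicit Types (x y z p v : 'rV[R]_d) (h : 'rV[R]_d -> R^o).

Lemma convex_fun_segment h y z (t : R) : convex_fun h -> 0 <= t -> t <= 1 ->
  h (y + t *: (z - y)) <= h y + t * (h z - h y).
Proof.
move=> hc t0 t1; have := hc z y t t0 t1.
rewrite scalerBl scale1r scalerBr addrCA.
by have -> : t * h z + (1 - t) * h y = h y + t * (h z - h y) by ring.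
Qed.

Lemma gradient_dquot_cvg h gr p v : is_gradient h gr p ->
  (h (p + t *: v) - h p) / t @[t --> 0^'+] --> dotv gr v.
Proof.
move=> [hd hg]; apply: cvg_dnbhs_at_right.
have -> : (fun t : R => (h (p + t *: v) - h p) / t) =
    (fun t => t^-1 *: ((h \o shift p) (t *: v) - h p)).
  by apply/funext => t /=; rewrite (addrC (t *: v)) mulrC.
rewrite -hg -deriveE //; exact: (@diff_derivable _ _ _ h p v hd).
Qed.

Lemma convex_gradient_le h gr p y : convex_fun h -> is_gradient h gr p ->
  h p + dotv gr (y - p) <= h y.
Proof.
move=> hc /(gradient_dquot_cvg (v := y - p)) /cvgr_to_le hq.
rewrite addrC -lerBrDr; apply: hq; near=> t.
have [t0 t1] : 0 < t /\ t <= 1.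
  by split; near: t; [exact: nbhs_right_gt | exact: nbhs_right_le].
by rewrite ler_pdivrMr // lerBlDl mulrC; exact: convex_fun_segment (ltW t0) t1.
Unshelve. all: by end_near.
Qed.

Lemma is_prox_dquot_ge h (gam : R) x y v (t : R) : 0 < gam -> is_prox h gam x y ->
  0 < t -> - (dotv (y - x) v / gam) <= (h (y + t *: v) - h y) / t + t * (sqn v / (2 * gam)).
Proof.
move=> g0 hy t0; have := hy (y + t *: v); rewrite /prox_objective addrAC sqn_addZ.
set D := dotv (y - x) v; rewrite -subr_ge0 => obj.
suff : 0 <= t * ((h (y + t *: v) - h y) / t + t * (sqn v / (2 * gam)) + D / gam).
  by rewrite pmulr_rge0 // addrC -lerBlDl sub0r.
apply: le_trans obj _; rewrite le_eqVlt; apply/orP; left; apply/eqP.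
by field; rewrite !gt_eqF.
Qed.

Lemma is_prox_three_point h (gam : R) x y z : 0 < gam -> convex_fun h ->
  is_prox h gam x y -> sqn (z - y) <= sqn (z - x) - sqn (y - x) - 2 * gam * (h y - h z).
Proof.
move=> g0 hc hy.
have : - (dotv (y - x) (z - y) / gam) <= h z - h y.
  apply: (cvg_right_ge (q := fun=> h z - h y) (B := sqn (z - y) / (2 * gam))).
    exact: cvg_cst.
  move=> t /andP[t0 t1]; apply: le_trans (is_prox_dquot_ge (z - y) g0 hy t0) _.
  by rewrite lerD2r ler_pdivrMr // lerBlDl mulrC convex_fun_segment // ltW.
rewrite -mulNr ler_pdivrMr // => hD.
have : 2 * dotv (y - x) (z - y) = sqn (z - x) - sqn (z - y) - sqn (y - x).
  have -> : z - x = (z - y) + (y - x) by rewrite addrA subrK.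
  by rewrite sqnD (dotvC (z - y)); ring.
nra.
Qed.

Lemma is_prox_gradient h gr (gam : R) x p : 0 < gam -> is_gradient h gr p ->
  is_prox h gam x p -> gr = gam^-1 *: (x - p).
Proof.
move=> g0 hg hp.
have dotv_ge0 v : 0 <= dotv (gr - gam^-1 *: (x - p)) v.
  have : - (dotv (p - x) v / gam) <= dotv gr v.
    apply: (cvg_right_ge (B := sqn v / (2 * gam)) (gradient_dquot_cvg (v := v) hg)).
    move=> t /andP[t0 _].
    exact: is_prox_dquot_ge.
  by move=> ?; rewrite dotvBl dotvZl -(opprB p) dotvNl mulrN mulrC subr_ge0.
apply/eqP; rewrite -subr_eq0; apply/eqP/sqn_eq0/eqP.
have := dotv_ge0 (- (gr - gam^-1 *: (x - p))); rewrite dotvNr oppr_ge0 => le0.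
by rewrite eq_le le0 sqn_ge0.
Qed.

Lemma is_prox_exists h (gam m : R) x : 0 < gam -> continuous h ->
  (forall w, m <= h w) -> exists y, is_prox h gam x y.
Proof.
move=> g0 hc hm.
(* Outside the box of radius c around x, the quadratic term alone exceeds
   h x - m, so the minimum over the (compact) box is global. *)
pose c := 1 + 2 * gam * (h x - m).
have c1 : 1 <= c by rewrite lerDl; have := hm x; nra.
pose K := [set w : 'rV[R]_d | forall i, `[x ord0 i - c, x ord0 i + c]%classic (w ord0 i)].
have Kc : compact K.
  apply: (@rV_compact _ _ (fun i => `[x ord0 i - c, x ord0 i + c]%classic)) => i.
  exact: segment_compact.
have xK : K x by move=> i /=; rewrite in_itv /=; apply/andP; split; lra.
have objc : {within K, continuous (prox_objective h gam x)}.
  apply: continuous_subspaceT => w; apply: (@continuousD R R^o _ h); first exact: hc.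
  apply: (@continuousM R 'rV[R]_d (fun w => sqn (w - x)) (fun=> (2 * gam)^-1)).
    exact: continuous_sqnB.
  exact: cst_continuous.
have [y /[swap] ymin yK] := compact_EVT_min (ex_intro _ x xK) Kc objc.
exists y => z; have [Kz|nKz] := pselect (K z); first by apply: ymin; rewrite inE.
apply: le_trans (ymin x _) _; first by rewrite inE.
have [i /negP] : exists i, ~ `[x ord0 i - c, x ord0 i + c]%classic (z ord0 i).
  exact/existsNP.
rewrite /= in_itv /= negb_and -!ltNge => /orP zi.
have : c ^+ 2 <= sqn (z - x).
  apply: le_trans (sqr_coord_le_sqn (z - x) i); rewrite !mxE !expr2.
  have c0 : 0 < c by lra.
  by case: zi => ?; nra.
rewrite /prox_objective subrr /sqn dotv0l mul0r addr0 => cz.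
have := hm z; suff : h x - m <= dotv (z - x) (z - x) / (2 * gam) by lra.
have c2 : c <= c ^+ 2 by rewrite expr2; nra.
have cE : c = 1 + 2 * gam * (h x - m) by [].
by rewrite ler_pdivlMr; lra.
Qed.
End Prox.

Section SPPMStep.
Variables (R : realType) (d : nat).
Implicit Types (x y p : 'rV[R]_d) (h : 'rV[R]_d -> R^o).

Lemma is_prox_step_le h (gam : R) x y xs p gp G : 0 < gam -> convex_fun h ->
  is_gradient h gp p -> is_prox h gam x y -> x - p = gam *: G ->
  sqn (y - xs) + 2 * gam * (h p - h xs) + sqn (x - p) <=
  sqn (x - xs) + gam ^+ 2 * sqn (gp - G).
Proof.
move=> g0 hc hgp hy xpG.
have := is_prox_three_point xs g0 hc hy; rewrite (sqn_subC xs) (sqn_subC xs).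
have := convex_gradient_le y hc hgp.
have -> : y - p = (y - x) + gam *: G by rewrite -xpG addrA subrK.
rewrite dotvDr dotvZr.
have := sqn_ge0 ((y - x) + gam *: gp); rewrite sqn_addZ (dotvC (y - x)).
rewrite xpG sqnZ (sqnB gp).
set a := sqn (y - x); set b := dotv gp (y - x); set e := dotv gp G.
move=> sq_ge0 cvx three.
have : 2 * gam * (h p + (b + gam * e)) <= 2 * gam * h y.
  by rewrite ler_pM2l ?mulr_gt0.
nra.
Qed.

Lemma sppm_rate_arith (mu delta gam i j e a b r : R) :
  0 < mu -> 0 < delta -> 0 < gam -> gam <= mu / (2 * delta ^+ 2) ->
  0 <= a -> 0 <= b -> r <= 2 * a + 2 * b ->
  mu / 2 * b <= e -> j <= delta ^+ 2 * b ->
  i + (2 * gam * e + a) <= gam ^+ 2 * j + r ->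
  i <= (1 - Num.min (gam * mu / 4) (1 / 2)) * r.
Proof.
move=> mu0 delta0 g0 gle a0 b0 rab be jb step.
have gd : gam * delta ^+ 2 <= mu / 2.
  by move: gle; rewrite ler_pdivlMr ?mulr_gt0 ?exprn_gt0 // => ?; nra.
have gj : gam ^+ 2 * j <= gam * (mu / 2) * b.
  have gdb : gam * (gam * delta ^+ 2) * b <= gam * (mu / 2) * b.
    by apply: ler_wpM2r => //; apply: ler_wpM2l => //; exact: ltW.
  apply: le_trans gdb.
  have -> : gam * (gam * delta ^+ 2) * b = gam ^+ 2 * (delta ^+ 2 * b) by ring.
  by apply: ler_wpM2l => //; exact: sqr_ge0.
have ge : gam * mu * b <= 2 * gam * e by nra.
set m := Num.min (gam * mu / 4) (1 / 2).
have m1 : m <= gam * mu / 4 by rewrite /m ge_min lexx.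
have m2 : m <= 1 / 2 by rewrite /m ge_min lexx orbT.
have m0 : 0 <= m by rewrite /m le_min !mulr_ge0 // ?ltW.
have : m * r <= a + gam * (mu / 2) * b by nra.
nra.
Qed.

End SPPMStep.

Section Measurability.
Variables (dT : measure_display) (T : measurableType dT) (R : realType) (d : nat).

Lemma measurable_sqn (h : T -> 'rV[R]_d) :
  (forall i, measurable_fun setT (fun xi => h xi ord0 i)) ->
  measurable_fun setT (fun xi => sqn (h xi)).
Proof. by move=> mh; apply: measurable_sum => i; exact: measurable_funM. Qed.

Lemma measurable_coordB (h : T -> 'rV[R]_d) (c : 'rV[R]_d) i :
  measurable_fun setT (fun xi => h xi ord0 i) ->
  measurable_fun setT (fun xi => (h xi - c) ord0 i).
Proof.
move=> mh; under eq_fun => xi do rewrite !mxE.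
by apply: measurable_funB => //; exact: measurable_cst.
Qed.

End Measurability.

Section Integrals.
Local Open Scope ereal_scope.
Variables (dT : measure_display) (T : measurableType dT) (R : realType).

(* No measurability is assumed: the inner expectations of [iid_expect] need
   not be measurable in the outer sample. *)
Lemma ge0_le_integralT (mu : {measure set T -> \bar R}) (f1 f2 : T -> \bar R) :
  (forall x, 0 <= f1 x) -> (forall x, f1 x <= f2 x) ->
  \int[mu]_x f1 x <= \int[mu]_x f2 x.
Proof.
move=> f10 f12; have f20 x : 0 <= f2 x by apply: le_trans (f12 x).
rewrite !ge0_integralTE //; apply: ereal_sup_le => _ [h /= hf1 <-].
by exists h => //= x; exact: le_trans (hf1 x) (f12 x).
Qed.

Lemma iid_expect_ge0 (D : probability T R) n (Phi : seq T -> \bar R) :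
  (forall s, 0 <= Phi s) -> 0 <= iid_expect D n Phi.
Proof.
elim: n Phi => [|n IH] Phi Phi0 /=; first exact: Phi0.
by apply: integral_ge0 => xi _; exact: IH.
Qed.

Lemma prob_ge0_integralMc (D : probability T R) (b : T -> R) (k c : R) :
  measurable_fun setT b -> (forall xi, 0 <= b xi)%R -> (0 <= k)%R -> (0 <= c)%R ->
  \int[D]_xi (k * b xi + c)%:E = k%:E * \int[D]_xi (b xi)%:E + c%:E.
Proof.
move=> mb b0 k0 c0; under eq_integral => xi _ do rewrite EFinD EFinM.
rewrite ge0_integralD //; last 2 first.
- by move=> xi _; rewrite mule_ge0 ?lee_fin.
- by apply: emeasurable_funM => //; exact/measurable_EFinP.
rewrite ge0_integralZl_EFin //; last 2 first.
- by move=> xi _; rewrite lee_fin.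
- exact/measurable_EFinP.
rewrite integral_cst // [X in _ + _ * X](_ : _ = 1) ?mule1 //; exact: probability_setT.
Qed.

End Integrals.

Section SPPM.
Variables (R : realType) (d : nat) (dT : measure_display)
  (T : measurableType dT) (D : probability T R)
  (f : T -> 'rV[R]_d -> R) (g : T -> 'rV[R]_d -> 'rV[R]_d)
  (F : 'rV[R]_d -> R) (gF : 'rV[R]_d -> 'rV[R]_d)
  (mu delta gamma : R) (xs : 'rV[R]_d)
  (prox : T -> 'rV[R]_d -> 'rV[R]_d).
Hypothesis f_int : forall x, D.-integrable setT (fun xi => (f xi x)%:E).
Hypothesis F_def : forall x, F x = Rintegral D setT (fun xi => f xi x).
Hypothesis g_int : forall x (i : 'I_d), D.-integrable setT (fun xi => (g xi x ord0 i)%:E).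
Hypothesis gF_def : forall x (i : 'I_d),
  gF x ord0 i = Rintegral D setT (fun xi => g xi x ord0 i).
Hypothesis F_grad : forall x, is_gradient F (gF x) x.
Hypothesis f_grad : {ae D, forall xi, forall x, is_gradient (f xi) (g xi x) x}.
Hypothesis f_convex : {ae D, forall xi, convex_fun (f xi)}.
Hypothesis mu_gt0 : 0 < mu.
Hypothesis F_strong : forall x y,
  F y + dotv (gF y) (x - y) + mu / 2 * sqn (x - y) <= F x.
Hypothesis F_min : forall x, F xs <= F x.
Hypothesis g_xs : {ae D, forall xi, g xi xs = 0}.
Hypothesis delta_gt0 : 0 < delta.
Hypothesis star_similar : forall x,
  (\int[D]_xi (sqn (g xi x - gF x - g xi xs))%:E <= (delta ^+ 2 * sqn (x - xs))%:E)%E.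
Hypothesis gamma_gt0 : 0 < gamma.
Hypothesis gamma_le : gamma <= mu / (2 * delta ^+ 2).
Hypothesis prox_ae : {ae D, forall xi, forall x, is_prox (f xi) gamma x (prox xi x)}.
Hypothesis prox_meas : forall x (i : 'I_d),
  measurable_fun setT (fun xi => prox xi x ord0 i).

Lemma measurable_f x : measurable_fun setT (fun xi => f xi x).
Proof. exact/measurable_EFinP/(measurable_int _ (f_int x)). Qed.

Lemma measurable_g x i : measurable_fun setT (fun xi => g xi x ord0 i).
Proof. exact/measurable_EFinP/(measurable_int _ (g_int x i)). Qed.

Lemma integral_f x : (\int[D]_xi (f xi x)%:E = (F x)%:E)%E.
Proof. by rewrite F_def fineK // (integrable_fin_num _ (f_int x)). Qed.

Lemma gF_xs : gF xs = 0.
Proof.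
apply/rowP => i; rewrite gF_def mxE /Rintegral (ae_eq_integral (cst 0%E)) //.
- by rewrite integral0.
- exact/measurable_EFinP/measurable_g.
- by apply: filterS g_xs => xi gxi _; rewrite gxi mxE.
Qed.

(* f_ξ(p) - f_ξ(x⋆) is nonnegative only almost surely; the truncation makes it
   nonnegative everywhere, as the nonnegative integration lemmas require. *)
Let excess p xi := Num.max (f xi p - f xi xs) 0.

Lemma measurable_excess p : measurable_fun setT (excess p).
Proof.
apply: measurable_maxr; last exact: measurable_cst.
by apply: measurable_funB; exact: measurable_f.
Qed.

Lemma measurable_sqn_prox x : measurable_fun setT (fun xi => sqn (prox xi x - xs)).
Proof. by apply: measurable_sqn => i; apply: measurable_coordB; exact: prox_meas. Qed.

Lemma measurable_sqn_noise p :
  measurable_fun setT (fun xi => sqn (g xi p - gF p - g xi xs)).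
Proof.
apply: measurable_sqn => i; under eq_fun => xi do rewrite !mxE.
apply: measurable_funB; last exact: measurable_g.
by apply: measurable_funB; [exact: measurable_g | exact: measurable_cst].
Qed.

Lemma integral_excess p : (\int[D]_xi (excess p xi)%:E = (F p - F xs)%:E)%E.
Proof.
rewrite (ae_eq_integral (fun xi => (f xi p)%:E - (f xi xs)%:E)%E) //.
- rewrite integralB_EFin //; last 2 first.
  + exact: f_int.
  + exact: f_int.
  + by rewrite !integral_f EFinB.
- exact/measurable_EFinP/measurable_excess.
- by apply: emeasurable_funB; exact/measurable_EFinP/measurable_f.
- apply: (filter_app _ _ g_xs); apply: (filter_app _ _ f_convex).
  apply: filterS f_grad => xi fg fc gxs _.
  have := convex_gradient_le p fc (fg xs); rewrite gxs dotv0l addr0 => fxs.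
  by rewrite /excess max_l ?subr_ge0 // EFinB.
Qed.

Lemma sppm_step_ae x p : x - p = gamma *: gF p ->
  {ae D, forall xi, setT xi ->
    ((sqn (prox xi x - xs) + (2 * gamma * excess p xi + sqn (x - p)))%:E <=
     (gamma ^+ 2 * sqn (g xi p - gF p - g xi xs) + sqn (x - xs))%:E)%E}.
Proof.
move=> xpG; apply: (filter_app _ _ prox_ae); apply: (filter_app _ _ g_xs).
apply: (filter_app _ _ f_convex); apply: filterS f_grad => xi fg fc gxs hprox _.
have := is_prox_step_le xs gamma_gt0 fc (fg p) (hprox x) xpG.
have := convex_gradient_le p fc (fg xs); rewrite gxs dotv0l addr0 subr0 => fxs.
by rewrite lee_fin /excess max_l ?subr_ge0 //; lra.
Qed.

Lemma sppm_step_integral_le x p : x - p = gamma *: gF p ->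
  (\int[D]_xi (sqn (prox xi x - xs))%:E + (2 * gamma * (F p - F xs) + sqn (x - p))%:E <=
   (gamma ^+ 2)%:E * \int[D]_xi (sqn (g xi p - gF p - g xi xs))%:E + (sqn (x - xs))%:E)%E.
Proof.
move=> xpG; have g2_ge0 : 0 <= 2 * gamma by rewrite mulr_ge0 // ltW.
have excess_ge0 xi : 0 <= excess p xi by rewrite /excess le_max lexx orbT.
have mexcess : measurable_fun setT (fun xi => 2 * gamma * excess p xi + sqn (x - p)).
  apply: measurable_funD; last exact: measurable_cst.
  by apply: measurable_funM; [exact: measurable_cst | exact: measurable_excess].
have mnoise : measurable_fun setT
    (fun xi => gamma ^+ 2 * sqn (g xi p - gF p - g xi xs) + sqn (x - xs)).
  apply: measurable_funD; last exact: measurable_cst.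
  by apply: measurable_funM; [exact: measurable_cst | exact: measurable_sqn_noise].
have : (\int[D]_xi (sqn (prox xi x - xs) + (2 * gamma * excess p xi + sqn (x - p)))%:E
    <= \int[D]_xi (gamma ^+ 2 * sqn (g xi p - gF p - g xi xs) + sqn (x - xs))%:E)%E.
  apply: ae_ge0_le_integral => //; last exact: sppm_step_ae.
  - by move=> xi _; rewrite lee_fin !addr_ge0 ?sqn_ge0 // mulr_ge0.
  - apply/measurable_EFinP/measurable_funD => //; exact: measurable_sqn_prox.
  - by move=> xi _; rewrite lee_fin addr_ge0 ?sqn_ge0 // mulr_ge0 ?sqn_ge0 ?sqr_ge0.
  - exact/measurable_EFinP.
under eq_integral => xi _ do rewrite EFinD.
rewrite ge0_integralD //; last 4 first.
- by move=> xi _; rewrite lee_fin sqn_ge0.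
- exact/measurable_EFinP/measurable_sqn_prox.
- by move=> xi _; rewrite lee_fin addr_ge0 ?sqn_ge0 // mulr_ge0.
- exact/measurable_EFinP.
rewrite !prob_ge0_integralMc ?sqr_ge0 ?sqn_ge0 //; last 3 first.
- exact: measurable_excess.
- exact: measurable_sqn_noise.
- by move=> xi; exact: sqn_ge0.
by rewrite integral_excess -EFinM -EFinD.
Qed.

Lemma sppm_step_expect x : (\int[D]_xi (sqn (prox xi x - xs))%:E <=
  ((1 - Num.min (gamma * mu / 4) (1 / 2)) * sqn (x - xs))%:E)%E.
Proof.
have F_cont : continuous F by move=> y; exact: differentiable_continuous (F_grad y).1.
have [p hp] := is_prox_exists x gamma_gt0 F_cont F_min.
have xpG : x - p = gamma *: gF p.
  by rewrite (is_prox_gradient gamma_gt0 (F_grad p) hp) scalerA mulfV ?gt_eqF ?scale1r.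
have := sppm_step_integral_le xpG; have := star_similar p.
have : (0 <= \int[D]_xi (sqn (g xi p - gF p - g xi xs))%:E)%E.
  by apply: integral_ge0 => xi _; rewrite lee_fin sqn_ge0.
have : (0 <= \int[D]_xi (sqn (prox xi x - xs))%:E)%E.
  by apply: integral_ge0 => xi _; rewrite lee_fin sqn_ge0.
case: (\int[D]_xi _)%E => [i| |] //; case: (\int[D]_xi _)%E => [j| |] //.
rewrite -!EFinM -!EFinD !lee_fin => _ _ jb step.
apply: (sppm_rate_arith mu_gt0 delta_gt0 gamma_gt0 gamma_le _ _ _ _ jb step).
- exact: sqn_ge0.
- exact: sqn_ge0.
- by rewrite -(subrKA p); exact: sqn_le_add.
- by have := F_strong p xs; rewrite gF_xs dotv0l addr0; lra.
Qed.

Lemma sppm_expect k x0 :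
  (iid_expect D k (fun s => (sqn (sppm prox x0 s - xs))%:E) <=
   ((1 - Num.min (gamma * mu / 4) (1 / 2)) ^+ k * sqn (x0 - xs))%:E)%E.
Proof.
set c := 1 - _; have c_ge0 : 0 <= c.
  by rewrite subr_ge0 ge_min; apply/orP; right; lra.
elim: k x0 => [|k IH] x0 /=; first by rewrite expr0 mul1r.
apply: le_trans (@ge0_le_integralT _ _ _ D _
  (fun xi => (c ^+ k * sqn (prox xi x0 - xs))%:E) _ _) _.
- by move=> xi; apply: iid_expect_ge0 => s; rewrite lee_fin sqn_ge0.
- by move=> xi; exact: IH.
under eq_integral => xi _ do rewrite EFinM.
rewrite ge0_integralZl_EFin ?exprn_ge0 //; last 2 first.
- by move=> xi _; rewrite lee_fin sqn_ge0.
- exact/measurable_EFinP/measurable_sqn_prox.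
rewrite exprSr -mulrA EFinM.
by apply: lee_wpmul2l; [rewrite lee_fin exprn_ge0 | exact: sppm_step_expect].
Qed.
End SPPM.

Theorem theorem6p1 (R : realType) (d : nat) (dT : measure_display)
  (T : measurableType dT) (D : probability T R)
  (f : T -> 'rV[R]_d -> R) (g : T -> 'rV[R]_d -> 'rV[R]_d)
  (F : 'rV[R]_d -> R) (gF : 'rV[R]_d -> 'rV[R]_d)
  (mu delta gamma : R) (xs x0 : 'rV[R]_d)
  (prox : T -> 'rV[R]_d -> 'rV[R]_d) :
  (* setting: f(x) = E[f_xi(x)], grad f(x) = E[grad f_xi(x)] *)
  (forall x, D.-integrable setT (fun xi => (f xi x)%:E)) ->
  (forall x, F x = Rintegral D setT (fun xi => f xi x)) ->
  (forall x (i : 'I_d), D.-integrable setT (fun xi => (g xi x ord0 i)%:E)) ->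
  (forall x (i : 'I_d), gF x ord0 i = Rintegral D setT (fun xi => g xi x ord0 i)) ->
  (forall x, is_gradient F (gF x) x) ->
  (* (A1) differentiability, g xi = grad f_xi, for D-a.e. xi *)
  {ae D, forall xi, forall x, is_gradient (f xi) (g xi x) x} ->
  (* (A2) convexity for D-a.e. xi *)
  {ae D, forall xi, convex_fun (f xi)} ->
  (* (A3) mu-strong convexity of f *)
  0 < mu ->
  (forall x y, F y + dotv (gF y) (x - y) + mu / 2 * sqn (x - y) <= F x) ->
  (forall x, F xs <= F x) ->
  (* (A4) interpolation at x⋆ *)
  {ae D, forall xi, g xi xs = 0} ->
  (* (SS) star similarity at x⋆ with constant delta > 0 *)
  0 < delta ->
  (forall x, (\int[D]_xi (sqn (g xi x - gF x - g xi xs))%:E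
               <= (delta ^+ 2 * sqn (x - xs))%:E)%E) ->
  0 < gamma -> gamma <= mu / (2 * delta ^+ 2) ->
  (* SPPM step: prox xi x = argmin_z { f_xi(z) + ||z - x||^2/(2 gamma) } *)
  {ae D, forall xi, forall x z,
     f xi (prox xi x) + sqn (prox xi x - x) / (2 * gamma)
       <= f xi z + sqn (z - x) / (2 * gamma)} ->
  (* each iterate is a random variable *)
  (forall x (i : 'I_d), measurable_fun setT (fun xi => prox xi x ord0 i)) ->
  forall k : nat,
    (iid_expect D k (fun s => (sqn (sppm prox x0 s - xs))%:E)
      <= (((1 - Num.min (gamma * mu / 4) (1 / 2)) ^+ k) * sqn (x0 - xs))%:E)%E.
Proof.
move=> f_int F_def g_int gF_def F_grad f_grad f_convex mu_gt0 F_strong F_min g_xs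
  delta_gt0 star_similar gamma_gt0 gamma_le prox_ae prox_meas k.
exact: (sppm_expect f_int F_def g_int gF_def F_grad f_grad f_convex mu_gt0 F_strong
  F_min g_xs delta_gt0 star_similar gamma_gt0 gamma_le prox_ae prox_meas).
Qed.
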